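(* Let $M(n,h)=\frac{2n+2-2\lceil 2\sqrt{n+h}\,\rceil}{4}$. If $A$ is a polyomino with $n$ tiles and $h$ holes such that $M(n,h)=h+\tfrac12$, then exactly one of the following occurs: (1) the dual graph of $A$ has a single cycle; (2) $A$ has a single hole of area two and all its other holes have area one; (3) $p_o(A)=2\lceil 2\sqrt{n+h}\,\rceil+2$.
   Context: A polyomino is a finite union of closed unit squares (tiles) of the square lattice, any two meeting (if at all) in a whole edge, whose interior is connected. Its holes are the bounded connected components of its complement in the plane; the area of a hole is the number of unit squares needed to fill it. The dual graph has a vertex per tile and an edge between tiles sharing an edge. $p_o(A)$ is the number of unit edges on the boundary of $A$ not bounding a hole. *)

From HB Require Import structures.
From mathcomp Require Import all_boot all_order all_algebra.
From mathcomp Require Import reals.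
Set Implicit Arguments. Unset Strict Implicit. Unset Printing Implicit Defensive.
Import Order.TTheory GRing.Theory Num.Theory.

(* Cells of the square lattice are represented inside a finite window
   'I_N x 'I_N; the cell (i,j) is the closed unit square [i,i+1]x[j,j+1].
   A polyomino is required to avoid the border row/columns of the window,
   so every cell outside the window (all empty) is connected to the
   (empty) border ring: the unbounded complementary component is exactly
   the set of empty cells connected to the border. *)
Section Poly.
Variable N : nat.
Definition cell := ('I_N * 'I_N)%type.

Definition adj : rel cell := fun x y =>
  ((x.1 == y.1) && ((x.2.+1 == y.2 :> nat) || (y.2.+1 == x.2 :> nat)))
  || ((x.2 == y.2) && ((x.1.+1 == y.1 :> nat) || (y.1.+1 == x.1 :> nat))).

Definition on_border (c : cell) : bool :=
  (c.1 == 0 :> nat) || (c.1 == N.-1 :> nat) || (c.2 == 0 :> nat) || (c.2 == N.-1 :> nat).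

Variable A : {set cell}.

Definition dadj : rel cell := fun x y => [&& adj x y, x \in A & y \in A].
Definition eadj : rel cell := fun x y => [&& adj x y, x \notin A & y \notin A].

Definition polyomino : Prop :=
  [/\ A != set0,
      (forall c, c \in A -> ~~ on_border c) &
      (forall x y, x \in A -> y \in A -> connect dadj x y)].

Definition outer (c : cell) : bool :=
  (c \notin A) && [exists b, on_border b && connect eadj c b].

Definition hole_cell (c : cell) : bool := (c \notin A) && ~~ outer c.

Definition holes : {set {set cell}} :=
  [set [set y | connect eadj x y] | x in [set c | hole_cell c]].

Definition ntiles : nat := #|A|.
Definition nholes : nat := #|holes|.

(* p_o(A): boundary unit edges not bounding a hole, i.e. edges between a
   tile and an empty cell of the unbounded component *)
Definition p_out : nat :=
  #|[set p : cell * cell | [&& p.1 \in A, outer p.2 & adj p.1 p.2]]|.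

Definition dual_edge (e : {set cell}) : bool :=
  (#|e| == 2) && (e \subset A) && [forall x in e, forall y in e, (x != y) ==> adj x y].

Definition is_cycle (C : {set {set cell}}) : Prop :=
  [/\ C != set0,
      (forall e, e \in C -> dual_edge e),
      (forall v : cell, #|[set e in C | v \in e]| = 0 \/ #|[set e in C | v \in e]| = 2) &
      (forall u v, u \in cover C -> v \in cover C ->
         connect (fun x y => [set x; y] \in C) u v)].

Definition single_cycle : Prop :=
  exists C, is_cycle C /\ forall C', is_cycle C' -> C' = C.

End Poly.

Local Open Scope ring_scope.
Definition ceil2sqrt (R : realType) (n h : nat) : int :=
  Num.ceil (2 * Num.sqrt ((n + h)%:R : R)).

Definition Mnh (R : realType) (n h : nat) : R :=
  (2 * n%:R + 2 - 2 * (ceil2sqrt R n h)%:~R) / 4.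

From HB Require Import structures.
From mathcomp Require Import all_boot all_order all_algebra.
From mathcomp Require Import reals.
From mathcomp Require Import zify ring lra.
Set Implicit Arguments. Unset Strict Implicit. Unset Printing Implicit Defensive.

(* Counting the four neighbours of every tile, which are tiles, outer empty cells or hole
   cells, gives 4n = 2E + p_o(A) + S, where E is the number of edges of the dual graph and S
   the sum of the perimeters of the holes. Connectivity gives E >= n - 1, the bounding-box
   isoperimetric inequality for A filled with its holes gives p_o(A) >= 2 ceil(2 sqrt(n + h)),
   and every hole has perimeter at least 4. The hypothesis M(n,h) = h + 1/2 says exactly that
   n = ceil(2 sqrt(n + h)) + 2h, so the three bounds leave a total slack of 2 in the identity:
   either E = n and the dual graph is unicyclic, or E = n - 1 and the slack goes either to the
   holes (one hole of perimeter 6, necessarily a domino, the others single cells) or to p_o(A). *)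

Lemma card_set_sum (T : finType) (P : pred T) : #|[set x | P x]| = \sum_x (P x : nat).
Proof. by rewrite -sum1_card big_mkcond; apply: eq_bigr => x _; rewrite inE; case: (P x). Qed.

Lemma card_pairs (T1 T2 : finType) (P : T1 -> T2 -> bool) :
  #|[set p : T1 * T2 | P p.1 p.2]| = \sum_x \sum_y (P x y : nat).
Proof. by rewrite (card_set_sum (fun p : T1 * T2 => P p.1 p.2)) pair_big. Qed.

Lemma sum_ge_const_eq (I : finType) (X : {set I}) (f : I -> nat) k :
  (forall i, i \in X -> k <= f i) -> \sum_(i in X) f i <= k * #|X| ->
  forall i, i \in X -> f i = k.
Proof.
move=> ge le i iX.
have [_] := @leqif_sum _ (mem X) (fun i => k == f i) (fun=> k) f
  (fun i iX => leqif_eq (ge i iX)).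
have lek : k * #|X| <= \sum_(i in X) f i by rewrite mulnC -sum_nat_const leq_sum.
by rewrite sum_nat_const mulnC eqn_leq le lek => /esym/forall_inP/(_ i iX)/eqP.
Qed.

Section EdgeSets.
Variable T : finType.
Implicit Types (S C G : {set {set T}}) (X V : {set T}) (u v w x y : T).

Definition degree S (v : T) := #|[set e in S | v \in e]|.
Definition edge_rel S : rel T := fun x y => [set x; y] \in S.
Definition pair_family S := forall e, e \in S -> #|e| = 2.

Lemma sum_degree S X : \sum_(v in X) degree S v = \sum_(e in S) #|e :&: X|.
Proof.
transitivity (\sum_(v in X) \sum_(e in S) (v \in e : nat)).
  apply: eq_bigr => v _; rewrite /degree -sum1_card big_mkcond [RHS]big_mkcond.
  by apply: eq_bigr => e _; rewrite inE; case: (e \in S).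
rewrite exchange_big; apply: eq_bigr => e _.
rewrite -sum1_card big_mkcond [RHS]big_mkcond; apply: eq_bigr => v _.
by rewrite inE; case: (v \in X); case: (v \in e).
Qed.

Lemma in_cover_degree S v : (v \in cover S) = (0 < degree S v).
Proof.
apply/bigcupP/card_gt0P => [[e eS ve]|[e]]; first by exists e; rewrite inE eS.
by rewrite inE => /andP[eS ve]; exists e.
Qed.

Lemma degree_notin_cover S v : v \notin cover S -> degree S v = 0.
Proof. by rewrite in_cover_degree lt0n negbK => /eqP. Qed.

Lemma degreeD1 S e v : e \in S -> degree (S :\ e) v + (v \in e) = degree S v.
Proof.
move=> eS; rewrite /degree; case: (boolP (v \in e)) => ve /=.
  rewrite [in RHS](cardsD1 e) inE eS ve addn1 add1n; congr _.+1.
  by apply: eq_card => f; rewrite !inE andbA.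
rewrite addn0; apply: eq_card => f; rewrite !inE.
by case: (eqVneq f e) => [->|]; rewrite ?(negbTE ve) ?andbF.
Qed.

Lemma edge_rel_sym S : symmetric (edge_rel S).
Proof. by move=> x y; rewrite /edge_rel setUC. Qed.

Lemma edge_rel_cover S x y : edge_rel S x y -> x \in cover S.
Proof. by move=> xy; apply/bigcupP; exists [set x; y]; rewrite ?set21. Qed.

Lemma cover_subset S S' : S' \subset S -> cover S' \subset cover S.
Proof.
move=> sub; apply/subsetP => v /bigcupP[e eS ve]; apply/bigcupP.
by exists e; first exact: (subsetP sub).
Qed.

Section PairFamily.
Variable S : {set {set T}}.
Hypothesis pS : pair_family S.

Lemma pair_family_sub S' : S' \subset S -> pair_family S'.
Proof. by move=> sub e eS; apply: pS; apply: (subsetP sub). Qed.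

Lemma handshake : \sum_(v in cover S) degree S v = 2 * #|S|.
Proof.
have -> : \sum_(v in cover S) degree S v = \sum_(v in [set: T]) degree S v.
  rewrite [RHS](big_setID (cover S)) /= setTI [X in _ + X]big1 ?addn0 //.
  by move=> v; rewrite inE => /andP[/degree_notin_cover].
rewrite sum_degree (eq_bigr (fun=> 2)) => [|e eS]; last by rewrite setIT pS.
by rewrite sum_nat_const mulnC.
Qed.

Lemma connect_in_edge e a b :
  e \in S -> a \in e -> b \in e -> connect (edge_rel S) a b.
Proof.
move=> eS ae be; have /cards2P[x [y [xy De]]] : #|e| == 2 by rewrite pS.
have exy : edge_rel S x y by rewrite /edge_rel -De.
have eyx : edge_rel S y x by rewrite edge_rel_sym.
move: ae be; rewrite De !inE => /orP[]/eqP-> /orP[]/eqP->;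
  by rewrite ?connect0 ?connect1.
Qed.

Definition component (u : T) := [set z | connect (edge_rel S) u z].

Lemma edge_sub_component u e w :
  e \in S -> w \in e -> w \in component u -> e \subset component u.
Proof.
move=> eS we; rewrite inE => uw; apply/subsetP => z ze; rewrite inE.
exact: connect_trans uw (connect_in_edge eS we ze).
Qed.

(* Every edge meeting a component lies inside it, so it contributes 0 or 2. *)
Lemma component_degree_sum_even u : ~~ odd (\sum_(w in component u) degree S w).
Proof.
rewrite sum_degree; elim/big_ind: _ => // [a b|e eS].
  by rewrite oddD => /negbTE-> /negbTE->.
have [->|/set0Pn[w]] := eqVneq (e :&: component u) set0; first by rewrite cards0.
rewrite inE => /andP[we wu].
by rewrite (setIidPl (edge_sub_component eS we wu)) pS.
Qed.

End PairFamily.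

Definition min_degree2 S := (S != set0) && [forall v in cover S, 1 < degree S v].

Definition forest S := forall S', S' \subset S -> ~~ min_degree2 S'.

Lemma forest_sub S S' : forest S -> S' \subset S -> forest S'.
Proof. by move=> fS sub S'' sub'; apply: fS (subset_trans sub' sub). Qed.

Lemma exists_leaf S :
  S != set0 -> ~~ min_degree2 S -> exists2 v, v \in cover S & degree S v = 1.
Proof.
rewrite /min_degree2 => -> /forall_inPn[v vc]; rewrite -leqNgt => d1.
by exists v => //; apply/eqP; rewrite eqn_leq d1 -in_cover_degree.
Qed.

Lemma forest_card_lt_cover S :
  pair_family S -> forest S -> S != set0 -> #|S| < #|cover S|.
Proof.
have [n] := ubnP #|S|; elim: n S => // n IH S ltS pS fS nS.
have [v vc /eqP/cards1P[e0 De0]] := exists_leaf nS (fS S (subxx S)).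
have : e0 \in [set e in S | v \in e] by rewrite De0 set11.
rewrite inE => /andP[e0S ve0].
have cardS : #|S| = #|S :\ e0|.+1 by rewrite (cardsD1 e0 S) e0S.
have cover_del : cover (S :\ e0) \subset cover S :\ v.
  apply/subsetP => w /bigcupP[f]; rewrite !inE => /andP[fe0 finS] wf.
  rewrite (subsetP (cover_subset (subsetDl S [set e0]))) ?andbT; last first.
    by apply/bigcupP; exists f; rewrite // !inE fe0.
  by apply: contra_neq fe0 => wv; apply/set1P; rewrite -De0 inE finS -wv wf.
have [S0|nS0] := eqVneq (S :\ e0) set0.
  rewrite cardS S0 cards0 -(pS _ e0S); apply: subset_leq_card.
  by apply/subsetP => w we0; apply/bigcupP; exists e0.
rewrite cardS (cardsD1 v (cover S)) vc ltnS.
apply: leq_trans (subset_leq_card cover_del).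
apply: IH; rewrite -?cardS //; first exact: pair_family_sub (subsetDl _ _).
exact: forest_sub (subsetDl _ _).
Qed.

Definition edge_cycle C : Prop :=
  [/\ C != set0, forall v, degree C v = 0 \/ degree C v = 2 &
      forall u v, u \in cover C -> v \in cover C -> connect (edge_rel C) u v].

Section MinimalCore.
Variable C : {set {set T}}.
Hypotheses (pC : pair_family C) (mC : min_degree2 C)
  (minC : forall C', C' \subset C -> min_degree2 C' -> #|C| <= #|C'|).

Lemma minimal_core_delete_forest e : e \in C -> forest (C :\ e).
Proof.
move=> eC C' sub; apply/negP => /(minC (subset_trans sub (subsetDl _ _))).
by rewrite leqNgt (cardsD1 e C) eC add1n ltnS subset_leq_card.
Qed.

Lemma minimal_core_card_le_cover : #|C| <= #|cover C|.
Proof.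
have [e eC] := set0Pn _ (proj1 (andP mC)).
rewrite (cardsD1 e C) eC add1n.
have [->|ne] := eqVneq (C :\ e) set0.
  have /card_gt0P[x xe] : 0 < #|e| by rewrite pC.
  by rewrite cards0; apply/card_gt0P; exists x; apply/bigcupP; exists e.
have lt := forest_card_lt_cover (pair_family_sub pC (subsetDl _ _))
  (minimal_core_delete_forest eC) ne.
exact: leq_trans lt (subset_leq_card (cover_subset (subsetDl _ _))).
Qed.

(* The degrees are at least 2 and, by the handshake lemma, average at most 2. *)
Lemma minimal_core_degree2 v : v \in cover C -> degree C v = 2.
Proof.
apply: (sum_ge_const_eq (f := degree C)); first by case/andP: mC => _ /forall_inP.
by rewrite handshake // leq_mul2l minimal_core_card_le_cover orbT.
Qed.

Lemma minimal_core_connected u v :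
  u \in cover C -> v \in cover C -> connect (edge_rel C) u v.
Proof.
move=> uc vc; pose X := component C u; pose CX := [set f in C | f \subset X].
have CXC : CX \subset C by apply/subsetP => f; rewrite inE => /andP[].
have degX w : w \in X -> degree CX w = degree C w.
  move=> wX; apply: eq_card => f; rewrite !inE -andbA; apply: andb_id2l => fC.
  by apply/andP/idP => [[]//|wf]; rewrite (edge_sub_component pC fC wf wX).
have coverX : cover CX \subset X.
  by apply/subsetP => w /bigcupP[f]; rewrite inE => /andP[_ /subsetP]; apply.
have mCX : min_degree2 CX.
  apply/andP; split.
    have /bigcupP[f fC uf] := uc; apply/set0Pn; exists f.
    by rewrite inE fC (edge_sub_component pC fC uf) // inE connect0.
  apply/forall_inP => w wc; have wX := subsetP coverX w wc.
  by rewrite degX // minimal_core_degree2 // (subsetP (cover_subset CXC)).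
have CXE : CX = C by apply/eqP; rewrite eqEcard CXC minC.
by have := subsetP coverX v; rewrite CXE inE; apply.
Qed.

Lemma minimal_core_cycle : edge_cycle C.
Proof.
split; [by case/andP: mC | move=> v | exact: minimal_core_connected].
by have [/minimal_core_degree2|/degree_notin_cover] := boolP (v \in cover C); auto.
Qed.

End MinimalCore.

Lemma min_degree2_sub_cycle S :
  pair_family S -> min_degree2 S ->
  exists2 C : {set {set T}}, C \subset S & edge_cycle C.
Proof.
move=> pS mS; pose P (C : {set {set T}}) := (C \subset S) && min_degree2 C.
have [|C /andP[CS mC] minC] := @arg_minnP _ S P (fun C : {set {set T}} => #|C|).
  by rewrite /P subxx.
exists C => //; apply: (minimal_core_cycle (pair_family_sub pS CS) mC) => C' C'C mC'.
by apply: minC; rewrite /P mC' (subset_trans C'C CS).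
Qed.

Lemma connect_neq_cover S u w : connect (edge_rel S) u w -> u != w -> w \in cover S.
Proof.
case/connectP => p; elim/last_ind: p => [|p z _] /=; first by move=> _ ->; rewrite eqxx.
rewrite rcons_path last_rcons => /andP[_ zw] -> _.
by apply: (@edge_rel_cover _ _ (last u p)); rewrite edge_rel_sym.
Qed.

Lemma edge_rel_subset S S' x y :
  S \subset S' -> connect (edge_rel S) x y -> connect (edge_rel S') x y.
Proof. by move=> sub; apply: connect_sub => a b ab; apply/connect1/(subsetP sub). Qed.

(* Otherwise u would be the only vertex of odd degree in its component in C :\ e. *)
Lemma cycle_delete_connect C e u v : pair_family C -> edge_cycle C -> e \in C ->
  e = [set u; v] -> connect (edge_rel (C :\ e)) u v.
Proof.
move=> pC [_ degC _] eC De; apply/negPn/negP => nuv.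
have pD := pair_family_sub pC (subsetDl C [set e]).
pose X := component (C :\ e) u.
have uX : u \in X by rewrite inE connect0.
have degX w : w \in X -> degree (C :\ e) w + (w == u) = 2.
  move=> wX; have -> : (w == u) = (w \in e).
    rewrite De !inE; have [wv|] := eqVneq w v; last by rewrite orbF.
    by move: wX nuv; rewrite inE wv => ->.
  have wc : w \in cover C.
    have [->|wu] := eqVneq w u; first by apply/bigcupP; exists e; rewrite // De set21.
    apply: (subsetP (cover_subset (subsetDl C [set e]))).
    by rewrite inE in wX; apply: connect_neq_cover wX _; rewrite eq_sym.
  rewrite degreeD1 //; case: (degC w) => // d0.
  by move: wc; rewrite in_cover_degree d0.
have sum_u : \sum_(w in X) (w == u : nat) = 1.
  by rewrite (bigD1 u) //= eqxx big1 // => w /andP[_ /negbTE->].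
have : \sum_(w in X) (degree (C :\ e) w + (w == u)) = 2 * #|X|.
  by rewrite (eq_bigr (fun=> 2)) ?sum_nat_const 1?mulnC // => w /degX.
rewrite big_split /= sum_u => /(congr1 odd); rewrite oddD oddM addbT /= => /negbFE.
by have := component_degree_sum_even pD u; rewrite /X => /negbTE->.
Qed.

Lemma connect_delete_cycle_edge G C e x y :
  pair_family C -> C \subset G -> edge_cycle C -> e \in C ->
  connect (edge_rel G) x y -> connect (edge_rel (G :\ e)) x y.
Proof.
move=> pC CG cC eC; apply: connect_sub => a b ab.
have [Dab|ne] := eqVneq [set a; b] e; last by apply: connect1; rewrite /edge_rel !inE ne.
apply: (edge_rel_subset (setSD [set e] CG)).
exact: cycle_delete_connect pC cC eC (esym Dab).
Qed.

Definition induced S X := [set e in S | e \subset X].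

Fixpoint ball S x0 k : {set T} :=
  if k is k'.+1 then ball S x0 k' :|: [set y | [exists z in ball S x0 k', edge_rel S z y]]
  else [set x0].

Lemma ball_mono S x0 k m : k <= m -> ball S x0 k \subset ball S x0 m.
Proof.
move=> /subnK <-; elim: (m - k) => // d IH.
by rewrite addSn; apply: subset_trans IH (subsetUl _ _).
Qed.

Lemma ball_path S x0 p : path (edge_rel S) x0 p -> last x0 p \in ball S x0 (size p).
Proof.
elim/last_ind: p => [|p z IH]; first by rewrite inE.
rewrite rcons_path last_rcons size_rcons => /andP[pp pz] /=.
by rewrite !inE; apply/orP; right; apply/exists_inP; exists (last x0 p); first exact: IH.
Qed.

(* A vertex entering the ball at step k+1 brings along the edge by which it is reached. *)
Lemma ball_new_edges S x0 k :
  #|ball S x0 k.+1 :\: ball S x0 k| <=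
  #|induced S (ball S x0 k.+1) :\: induced S (ball S x0 k)|.
Proof.
set B := ball S x0 k; set B' := ball S x0 k.+1.
pose pz y := odflt x0 [pick z in B | edge_rel S z y].
have pzP y : y \in B' :\: B -> pz y \in B /\ edge_rel S (pz y) y.
  rewrite !inE => /andP[yB /orP[]]; first by rewrite (negbTE yB).
  rewrite /pz; case: pickP => [z /andP[]//|none /exists_inP[z zB zy]].
  by move: (none z); rewrite zB zy.
rewrite -(@card_in_imset _ _ (fun y => [set pz y; y])) => [|y y' yN y'N E]; last first.
  have : y \in [set pz y'; y'] by rewrite -E set22.
  rewrite !inE => /orP[/eqP yz|/eqP //]; have [zB _] := pzP y' y'N.
  by move: yN; rewrite !inE yz zB.
have BB' : B \subset B' := subsetUl _ _.
clearbody B B'; apply/subset_leq_card/subsetP => f /imsetP[y yN ->].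
have [zB zy] := pzP y yN; move: yN; rewrite !inE => /andP[yB yB'].
by rewrite [_ \in S]zy !subUset !sub1set yB' (subsetP BB') // (negbTE yB) !andbF.
Qed.

Lemma ball_card S x0 k : #|ball S x0 k| <= #|induced S (ball S x0 k)| + 1.
Proof.
elim: k => [|k IH]; first by rewrite cards1 leq_addl.
have sub : ball S x0 k \subset ball S x0 k.+1 := subsetUl _ _.
have isub : induced S (ball S x0 k) \subset induced S (ball S x0 k.+1).
  by apply/subsetP => e; rewrite !inE => /andP[-> /subset_trans]; apply.
have := ball_new_edges S x0 k; rewrite !cardsD (setIidPr sub) (setIidPr isub).
have := subset_leq_card sub; have := subset_leq_card isub; lia.
Qed.

Lemma connected_card_le S V :
  (forall x y, x \in V -> y \in V -> connect (edge_rel S) x y) -> #|V| <= #|S| + 1.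
Proof.
move=> conV; have [->|/set0Pn[x0 x0V]] := eqVneq V set0; first by rewrite cards0.
have VB : V \subset ball S x0 #|T|.
  apply/subsetP => y yV; have /connectP[p pth ->] := conV x0 y x0V yV.
  case/shortenP: pth => p' pth' uniq_p' _.
  have sz : size p' < #|T| by have := max_card (mem (x0 :: p')); rewrite (card_uniqP uniq_p').
  exact: subsetP (ball_mono S x0 (ltnW sz)) _ (ball_path pth').
apply: leq_trans (subset_leq_card VB) (leq_trans (ball_card _ _ _) _).
by rewrite leq_add2r subset_leq_card //; apply/subsetP => e; rewrite inE => /andP[].
Qed.

Lemma cycle_card_le G C V :
  (forall x y, x \in V -> y \in V -> connect (edge_rel G) x y) ->
  pair_family C -> C \subset G -> edge_cycle C -> #|V| <= #|G|.
Proof.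
move=> conV pC CG cC; have [/set0Pn[e eC] _ _] := cC.
have conV' x y : x \in V -> y \in V -> connect (edge_rel (G :\ e)) x y.
  by move=> xV yV; apply: connect_delete_cycle_edge pC CG cC eC (conV x y xV yV).
by have := connected_card_le conV'; rewrite (cardsD1 e G) (subsetP CG e eC) add1n addn1.
Qed.

Lemma exists_cycle_card S V : pair_family S -> cover S \subset V -> V != set0 ->
  #|V| <= #|S| -> exists2 C : {set {set T}}, C \subset S & edge_cycle C.
Proof.
move=> pS coverS nV VS.
have [/existsP[S' /andP[S'S mS']]|noS'] :=
  boolP [exists S' : {set {set T}}, (S' \subset S) && min_degree2 S'].
  have [C CS' cC] := min_degree2_sub_cycle (pair_family_sub pS S'S) mS'.
  by exists C; first exact: subset_trans CS' S'S.
have fS : forest S.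
  by move=> S' S'S; apply: contra noS' => mS'; apply/existsP; exists S'; rewrite S'S.
have nS : S != set0 by rewrite -card_gt0 (leq_trans _ VS) // card_gt0.
have := forest_card_lt_cover pS fS nS.
by rewrite ltnNge (leq_trans (subset_leq_card coverS) VS).
Qed.

(* Deleting an edge of C1 missing from C2 keeps V connected and C2 a cycle, so #|V| < #|G|. *)
Lemma unicyclic_cycle_sub G V (C1 C2 : {set {set T}}) : pair_family G ->
  (forall x y, x \in V -> y \in V -> connect (edge_rel G) x y) -> #|G| = #|V| ->
  C1 \subset G -> edge_cycle C1 -> C2 \subset G -> edge_cycle C2 -> C1 \subset C2.
Proof.
move=> pG conG GV C1G cC1 C2G cC2; apply/subsetP => e eC1; apply/negPn/negP => eC2.
have conG' x y : x \in V -> y \in V -> connect (edge_rel (G :\ e)) x y.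
  by move=> xV yV; exact: connect_delete_cycle_edge (pair_family_sub pG C1G) C1G cC1 eC1
    (conG x y xV yV).
have C2G' : C2 \subset G :\ e.
  by apply/subsetP => f fC2; rewrite !inE (subsetP C2G) // andbT; apply: contraNneq eC2 => <-.
have := cycle_card_le conG' (pair_family_sub pG C2G) C2G' cC2.
by rewrite -GV (cardsD1 e G) (subsetP C1G e eC1) add1n ltnn.
Qed.

End EdgeSets.

Section Cells.
Variable N : nat.
Implicit Types (x y : cell N) (S : {set cell N}).

Lemma adj_sym : symmetric (@adj N).
Proof.
move=> x y; rewrite /adj [x.1 == _]eq_sym [x.2 == _]eq_sym.
by case: (y.1 == x.1); case: (y.2 == x.2) => /=; lia.
Qed.

Lemma adj_irrefl x : adj x x = false.
Proof. by rewrite /adj !eqxx /=; lia. Qed.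

Lemma interior_bounds x :
  ~~ on_border x -> [/\ 0 < x.1, x.1.+1 < N, 0 < x.2 & x.2.+1 < N].
Proof.
rewrite /on_border -!orbA !negb_or => /and4P[].
by case: x => [[i ltiN] [j ltjN]] /=; split; lia.
Qed.

Definition left_nbr x : cell N := (x.1, insubd x.2 x.2.-1).
Definition right_nbr x : cell N := (x.1, insubd x.2 x.2.+1).
Definition up_nbr x : cell N := (insubd x.1 x.1.-1, x.2).
Definition down_nbr x : cell N := (insubd x.1 x.1.+1, x.2).

Lemma nbr_coords x : ~~ on_border x ->
  [/\ ((left_nbr x).2 : nat) = x.2.-1, ((right_nbr x).2 : nat) = x.2.+1,
      ((up_nbr x).1 : nat) = x.1.-1 & ((down_nbr x).1 : nat) = x.1.+1].
Proof. by case/interior_bounds => *; rewrite !val_insubd; split; apply: ifT; lia. Qed.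

Lemma adj_interiorE x y : ~~ on_border x ->
  (adj x y : nat) = (y == left_nbr x) + (y == right_nbr x) + (y == up_nbr x) + (y == down_nbr x).
Proof.
move=> ix; have [l r u d] := nbr_coords ix; have [x1_gt0 _ x2_gt0 _] := interior_bounds ix.
rewrite /adj /left_nbr /right_nbr /up_nbr /down_nbr.
case: x y ix l r u d x1_gt0 x2_gt0 => [x1 x2] [y1 y2] _ /=.
rewrite !xpair_eqE -!val_eqE /= => -> -> -> ->; lia.
Qed.

Lemma sum_adj_interior x : ~~ on_border x -> \sum_y (adj x y : nat) = 4.
Proof.
have sum1 (a : cell N) : \sum_y (y == a : nat) = 1.
  by rewrite (bigD1 a) //= eqxx big1 // => y /negbTE->.
by move=> ix; rewrite (eq_bigr _ (fun y _ => adj_interiorE y ix)) !big_split /= !sum1.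
Qed.

Definition perimeter S : nat :=
  #|[set p : cell N * cell N | [&& p.1 \in S, p.2 \notin S & adj p.1 p.2]]|.

Lemma adj_nbr x y : ~~ on_border x ->
  y \in [:: left_nbr x; right_nbr x; up_nbr x; down_nbr x] -> adj x y.
Proof.
move=> ix; rewrite -has_pred1 /= !orbF => nbr_y; have := adj_interiorE y ix.
by case: (adj x y) => //=; move: nbr_y; rewrite !(eq_sym _ y); case/or4P=> ->; lia.
Qed.

(* On each line (key class) of S, the F-minimal cell has its nb-neighbour outside S. *)
Lemma card_lines_le_boundary S (key : cell N -> 'I_N) (F : cell N -> nat)
    (nb : cell N -> cell N) (dir : rel (cell N)) :
  (forall x, x \in S -> [/\ adj x (nb x), dir x (nb x), key (nb x) = key x & F (nb x) < F x]) ->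
  #|key @: S| <=
  #|[set p : cell N * cell N | [&& p.1 \in S, p.2 \notin S, adj p.1 p.2 & dir p.1 p.2]]|.
Proof.
move=> nbS; set P := [set p | _].
apply: leq_trans (leq_imset_card (fun p : cell N * cell N => key p.1) P).
apply/subset_leq_card/subsetP => _ /imsetP[x0 x0S ->].
have P0 : (x0 \in S) && (key x0 == key x0) by rewrite x0S eqxx.
have [x /andP[xS /eqP kx] xmin] := @arg_minnP _ x0 (fun x => (x \in S) && (key x == key x0)) F P0.
have [ax dx knx Fnx] := nbS x xS.
apply/imsetP; exists (x, nb x); last by rewrite kx.
rewrite !inE /= xS ax dx /= andbT.
by apply/negP => nxS; move: Fnx; rewrite ltnNge xmin // nxS knx kx /=.
Qed.

Lemma perimeter_bounding_box S : (forall x, x \in S -> ~~ on_border x) ->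
  exists a b, #|S| <= a * b /\ 2 * (a + b) <= perimeter S.
Proof.
move=> iS; exists #|[set x.1 | x in S]|, #|[set x.2 | x in S]|; split.
  rewrite -cardsX; apply/subset_leq_card/subsetP => x xS.
  by rewrite inE; apply/andP; split; apply/imsetP; exists x.
pose side (dir : rel (cell N)) :=
  #|[set p : cell N * cell N | [&& p.1 \in S, p.2 \notin S, adj p.1 p.2 & dir p.1 p.2]]|.
pose dL (p q : cell N) := (q.1 == p.1 :> nat) && (q.2.+1 == p.2 :> nat).
pose dR (p q : cell N) := (q.1 == p.1 :> nat) && (p.2.+1 == q.2 :> nat).
pose dU (p q : cell N) := (q.2 == p.2 :> nat) && (q.1.+1 == p.1 :> nat).
pose dD (p q : cell N) := (q.2 == p.2 :> nat) && (p.1.+1 == q.1 :> nat).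
have sides : side dL + side dR + side dU + side dD <= perimeter S.
  rewrite /side /perimeter !card_set_sum -!big_split /=; apply: leq_sum => p _.
  rewrite /dL /dR /dU /dD.
  by case: (p.1 \in S); case: (p.2 \in S); case: (adj p.1 p.2) => //=; lia.
have bL : #|[set x.1 | x in S]| <= side dL.
  apply: (card_lines_le_boundary (F := fun x => x.2 : nat) (nb := @left_nbr)) => x xS.
  have ix := iS x xS; have [l _ _ _] := nbr_coords ix; have [_ _ ? _] := interior_bounds ix.
  split; [by rewrite adj_nbr ?inE ?eqxx | rewrite /dL l /= eqxx /= | by [] |
         cbv beta; rewrite l]; lia.
have bR : #|[set x.1 | x in S]| <= side dR.
  apply: (card_lines_le_boundary (F := fun x => N - x.2) (nb := @right_nbr)) => x xS.
  have ix := iS x xS; have [_ r _ _] := nbr_coords ix; have [_ _ _ ?] := interior_bounds ix.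
  split; [by rewrite adj_nbr ?inE ?eqxx ?orbT | rewrite /dR r /= eqxx /= | by [] |
         cbv beta; rewrite r]; lia.
have bU : #|[set x.2 | x in S]| <= side dU.
  apply: (card_lines_le_boundary (F := fun x => x.1 : nat) (nb := @up_nbr)) => x xS.
  have ix := iS x xS; have [_ _ u _] := nbr_coords ix; have [? _ _ _] := interior_bounds ix.
  split; [by rewrite adj_nbr ?inE ?eqxx ?orbT | rewrite /dU u /= eqxx /= | by [] |
         cbv beta; rewrite u]; lia.
have bD : #|[set x.2 | x in S]| <= side dD.
  apply: (card_lines_le_boundary (F := fun x => N - x.1) (nb := @down_nbr)) => x xS.
  have ix := iS x xS; have [_ _ _ d] := nbr_coords ix; have [_ ? _ _] := interior_bounds ix.
  split; [by rewrite adj_nbr ?inE ?eqxx ?orbT | rewrite /dD d /= eqxx /= | by [] |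
         cbv beta; rewrite d]; lia.
lia.
Qed.

Lemma perimeter_isoperimetric S : (forall x, x \in S -> ~~ on_border x) ->
  exists k, 4 * #|S| <= k ^ 2 /\ 2 * k <= perimeter S.
Proof.
case/perimeter_bounding_box => a [b [Sab pab]]; exists (a + b); split => //.
by apply: leq_trans (nat_AGM2 a b); rewrite leq_mul2l.
Qed.

Lemma perimeter_sqr_ge S : (forall x, x \in S -> ~~ on_border x) ->
  16 * #|S| <= perimeter S ^ 2.
Proof. by case/perimeter_isoperimetric => k [Sk pk]; nia. Qed.

Lemma perimeter_cell x : ~~ on_border x -> perimeter [set x] = 4.
Proof.
move=> ix; rewrite /perimeter.
rewrite (card_pairs (fun a b => [&& a \in [set x], b \notin [set x] & adj a b])).
rewrite (bigD1 x) //= [X in _ + X]big1 ?addn0 => [|a ax]; last first.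
  by rewrite big1 // => b; rewrite inE (negbTE ax).
rewrite -(sum_adj_interior ix); apply: eq_bigr => y _; rewrite !inE eqxx /=.
by have [->|] := eqVneq y x; rewrite ?adj_irrefl.
Qed.

End Cells.

Section Polyomino.
Variables (N : nat) (A : {set cell N}).
Implicit Types (x y z : cell N) (H : {set cell N}).

Lemma eadj_sym : symmetric (eadj A).
Proof. by move=> x y; rewrite /eadj adj_sym; case: (x \in A); case: (y \in A). Qed.

Lemma connect_eadj_notin x y : x \notin A -> connect (eadj A) x y -> y \notin A.
Proof.
move=> xA /connectP[p]; elim/last_ind: p => [_ ->//|p z _].
by rewrite rcons_path last_rcons => /andP[_ /and3P[_ _ zA]] ->.
Qed.

Lemma border_outer b : on_border b -> b \notin A -> outer A b.
Proof. by move=> ob bA; rewrite /outer bA; apply/existsP; exists b; rewrite ob connect0. Qed.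

Lemma hole_cell_interior y : hole_cell A y -> ~~ on_border y.
Proof. by case/andP=> yA; apply: contra => ob; rewrite border_outer. Qed.

Lemma outer_connect x y : x \notin A -> connect (eadj A) x y -> outer A y -> outer A x.
Proof.
move=> xA xy /andP[_ /existsP[b /andP[ob yb]]].
by rewrite /outer xA; apply/existsP; exists b; rewrite ob (connect_trans xy yb).
Qed.

Lemma cell_trichotomy y : (y \in A : nat) + outer A y + hole_cell A y = 1.
Proof. by rewrite /hole_cell /outer; case: (y \in A); case: [exists b, _]. Qed.

Definition empty_component x := [set y | connect (eadj A) x y].

Lemma empty_component_hole x y :
  hole_cell A x -> y \in empty_component x -> hole_cell A y.
Proof.
case/andP=> xA xnout; rewrite inE => xy; rewrite /hole_cell (connect_eadj_notin xA xy).
by apply: contra xnout; apply: outer_connect.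
Qed.

Lemma empty_component_nbr x y z : hole_cell A x -> y \in empty_component x ->
  z \notin empty_component x -> adj y z -> z \in A.
Proof.
move=> hx yx zx yz; apply/negPn/negP => zA.
have /andP[yA _] := empty_component_hole hx yx.
move: yx zx; rewrite !inE => xy /negP; apply; apply: connect_trans xy (connect1 _).
by rewrite /eadj yz yA zA.
Qed.

Lemma empty_component_eq x y :
  y \in empty_component x -> empty_component y = empty_component x.
Proof.
rewrite inE => xy; have yx : connect (eadj A) y x by rewrite (sym_connect_sym eadj_sym).
apply/setP => z; rewrite !inE.
by apply/idP/idP; [exact: connect_trans xy | exact: connect_trans yx].
Qed.

Lemma holesP H :
  reflect (exists2 x, hole_cell A x & H = empty_component x) (H \in holes A).
Proof.
apply: (iffP imsetP) => [[x]|[x hx ->]]; first by rewrite inE => hx ->; exists x.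
by exists x; rewrite ?inE.
Qed.

Lemma mem_hole_cell H y : H \in holes A -> y \in H -> hole_cell A y.
Proof. by case/holesP => x hx -> /(empty_component_hole hx). Qed.

Lemma hole_nbr H y z : H \in holes A -> y \in H -> adj y z -> (z \in A) = (z \notin H).
Proof.
case/holesP => x hx -> yH yz; apply/idP/idP => [zA|zH]; last exact: empty_component_nbr hx yH zH yz.
by apply: contraL zA => /(empty_component_hole hx)/andP[].
Qed.

Lemma sum_mem_holes y : \sum_(H in holes A) (y \in H : nat) = hole_cell A y.
Proof.
have [hy|nhy] := boolP (hole_cell A y); last first.
  by rewrite big1 // => H Hh; apply/eqP; rewrite eqb0; apply: contra nhy; apply: mem_hole_cell.
have yh : empty_component y \in holes A by apply/holesP; exists y.
rewrite (bigD1 _ yh) /= inE connect0 big1 // => H /andP[/holesP[x hx ->] ne].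
apply/eqP; rewrite eqb0; apply: contra ne => yx.
by rewrite (empty_component_eq yx).
Qed.

Lemma hole_nonempty H : H \in holes A -> H != set0.
Proof. by case/holesP => x _ ->; apply/set0Pn; exists x; rewrite inE connect0. Qed.

Definition dual_edges : {set {set cell N}} := [set e | dual_edge A e].

Lemma dual_edges_pair : pair_family dual_edges.
Proof. by move=> e; rewrite inE => /andP[/andP[/eqP]]. Qed.

Lemma dual_edges_cover : cover dual_edges \subset A.
Proof.
apply/subsetP => v /bigcupP[e]; rewrite inE => /andP[/andP[_ eA] _].
exact: (subsetP eA).
Qed.

Lemma mem_dual_edges2 x y : ([set x; y] \in dual_edges) = [&& adj x y, x \in A & y \in A].
Proof.
rewrite inE /dual_edge; have [->|xy] := eqVneq x y; first by rewrite adj_irrefl setUid cards1.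
rewrite cards2 xy subUset !sub1set /=.
case: (x \in A) (y \in A) => [] [] //=; rewrite ?andbF // andbT.
apply/forall_inP/idP => [/(_ x (set21 _ _))/forall_inP/(_ y (set22 _ _))/implyP|xy_adj a].
  exact.
have yx_adj : adj y x by rewrite adj_sym.
by rewrite !inE => /orP[]/eqP->; apply/forall_inP => b; rewrite !inE => /orP[]/eqP->;
  rewrite ?eqxx ?xy_adj ?yx_adj ?implybT.
Qed.

Lemma edge_rel_dual_edges : edge_rel dual_edges =2 dadj A.
Proof. by move=> x y; rewrite /edge_rel mem_dual_edges2. Qed.

Lemma is_cycle_dual_edges C : is_cycle A C <-> C \subset dual_edges /\ edge_cycle C.
Proof.
split => [[nC eC dC cC]|[/subsetP CA [nC dC cC]]]; last by split => // e /CA; rewrite inE.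
by split; first by apply/subsetP => e /eC; rewrite inE.
Qed.

Lemma degree_dual_edges x : x \in A -> degree dual_edges x = #|[set y in A | adj x y]|.
Proof.
move=> xA; rewrite /degree -(@card_in_imset _ _ (fun y => [set x; y])); last first.
  move=> y1 y2; rewrite !inE => /andP[_ xy1] _ E.
  have : y1 \in [set x; y2] by rewrite -E set22.
  by rewrite !inE => /orP[/eqP y1x|/eqP //]; move: xy1; rewrite y1x adj_irrefl.
apply: eq_card => e; rewrite inE; apply/andP/imsetP => [[eE xe]|[y]].
  have /cards2P[a [b [_ De]]] : #|e| == 2 by rewrite dual_edges_pair.
  have [y Dy] : exists y, e = [set x; y].
    by move: xe; rewrite De !inE => /orP[]/eqP->; [exists b | exists a; rewrite setUC].
  by exists y => //; move: eE; rewrite Dy mem_dual_edges2 inE => /and3P[-> _ ->].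
by rewrite inE => /andP[yA xy] ->; rewrite mem_dual_edges2 xy xA yA set21.
Qed.

Definition hole_cells : {set cell N} := [set c | hole_cell A c].

Lemma p_out_filled : p_out A = perimeter (A :|: hole_cells).
Proof.
rewrite /p_out /perimeter; apply: eq_card => -[x y]; rewrite !inE /=.
have := cell_trichotomy y; have [hx|nhx] := boolP (hole_cell A x); last first.
  rewrite orbF; case: (x \in A) => //.
  by case: (y \in A); case: (outer A y); case: (hole_cell A y).
have /andP[xA xnout] := hx; rewrite (negbTE xA) /=.
case: (boolP (adj x y)) => xy; rewrite ?andbF //= andbT => ty; apply/esym/negbTE.
rewrite negbK; apply/negPn/negP; rewrite negb_or => /andP[yA nhy]; move/negP: xnout; apply.
apply: (outer_connect (y := y) xA (connect1 _)); first exact/and3P.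
by move: ty; rewrite (negbTE yA) (negbTE nhy); case: (outer A y).
Qed.

Lemma card_filled : #|A| + #|holes A| <= #|A :|: hole_cells|.
Proof.
rewrite cardsU; have -> : A :&: hole_cells = set0.
  by apply/setP => c; rewrite !inE /hole_cell; case: (c \in A).
by rewrite cards0 subn0 leq_add2l leq_imset_card.
Qed.

Lemma sum_adj_partition x : \sum_y (adj x y : nat) =
  \sum_y ((y \in A) && adj x y : nat) + \sum_y (outer A y && adj x y : nat) +
  \sum_y (hole_cell A y && adj x y : nat).
Proof.
rewrite -!big_split /=; apply: eq_bigr => y _; have := cell_trichotomy y.
by case: (y \in A); case: (outer A y); case: (hole_cell A y); case: (adj x y).
Qed.

Lemma sum_adj_tiles :
  \sum_(x in A) \sum_y ((y \in A) && adj x y : nat) = 2 * #|dual_edges|.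
Proof.
transitivity (\sum_(x in A) degree dual_edges x).
  by apply: eq_bigr => x xA; rewrite degree_dual_edges // -card_set_sum.
rewrite sum_degree (eq_bigr (fun=> 2)) => [|e eE]; first by rewrite sum_nat_const mulnC.
by rewrite (setIidPl (subset_trans (bigcup_sup _ eE) dual_edges_cover)) dual_edges_pair.
Qed.

Lemma sum_adj_outer : \sum_(x in A) \sum_y (outer A y && adj x y : nat) = p_out A.
Proof.
rewrite /p_out (card_pairs (fun x y => [&& x \in A, outer A y & adj x y])) big_mkcond.
by apply: eq_bigr => x _; case: (x \in A); rewrite // big1.
Qed.

Lemma perimeter_hole H : H \in holes A ->
  perimeter H = \sum_(x in A) \sum_(y in H) (adj x y : nat).
Proof.
move=> Hh; rewrite exchange_big /perimeter.
rewrite (card_pairs (fun a b => [&& a \in H, b \notin H & adj a b])) [RHS]big_mkcond.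
apply: eq_bigr => y _; case: (boolP (y \in H)) => yH; last by rewrite big1.
rewrite [RHS]big_mkcond; apply: eq_bigr => x _ /=.
rewrite [adj x y]adj_sym; have [yx|_] := boolP (adj y x); last by rewrite andbF; case: (x \in A).
by rewrite (hole_nbr Hh yH yx) andbT; case: (x \in H).
Qed.

Definition holes_perimeter := \sum_(H in holes A) perimeter H.

Lemma sum_adj_holes :
  \sum_(x in A) \sum_y (hole_cell A y && adj x y : nat) = holes_perimeter.
Proof.
rewrite /holes_perimeter (eq_bigr _ (fun H => @perimeter_hole H)) [RHS]exchange_big.
apply: eq_bigr => x _.
under eq_bigr => y _ do rewrite -mulnb -sum_mem_holes big_distrl.
rewrite exchange_big; apply: eq_bigr => H _; rewrite [RHS]big_mkcond.
by apply: eq_bigr => y _; case: (y \in H); rewrite /= ?mul1n.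
Qed.

Lemma tiles_adjacency_count : (forall x, x \in A -> ~~ on_border x) ->
  4 * #|A| = 2 * #|dual_edges| + p_out A + holes_perimeter.
Proof.
move=> iA; rewrite -sum_adj_tiles -sum_adj_outer -sum_adj_holes -!big_split /=.
rewrite mulnC -sum_nat_const; apply: eq_bigr => x xA.
by rewrite -sum_adj_partition sum_adj_interior // iA.
Qed.

End Polyomino.

Section Holes.
Variables (N : nat) (A : {set cell N}).
Implicit Types (H : {set cell N}).

Lemma hole_interior H : H \in holes A -> forall y, y \in H -> ~~ on_border y.
Proof. by move=> Hh y /(mem_hole_cell Hh)/hole_cell_interior. Qed.

Lemma perimeter_hole_sqr_ge H : H \in holes A -> 16 * #|H| <= perimeter H ^ 2.
Proof. by move/hole_interior/perimeter_sqr_ge. Qed.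

Lemma hole_card_gt0 H : H \in holes A -> 0 < #|H|.
Proof. by move=> Hh; rewrite card_gt0 (hole_nonempty Hh). Qed.

Lemma perimeter_hole_ge4 H : H \in holes A -> 4 <= perimeter H.
Proof. by move=> Hh; have := perimeter_hole_sqr_ge Hh; have := hole_card_gt0 Hh; nia. Qed.

Lemma perimeter_hole_eq4 H : H \in holes A -> (perimeter H == 4) = (#|H| == 1).
Proof.
move=> Hh; apply/eqP/eqP => [p4|/eqP/cards1P[y Hy]].
  by have := perimeter_hole_sqr_ge Hh; have := hole_card_gt0 Hh; rewrite p4; lia.
by rewrite Hy perimeter_cell // (hole_interior Hh) // Hy set11.
Qed.

Lemma perimeter_hole_gt4 H : H \in holes A -> 4 < perimeter H -> 6 <= perimeter H.
Proof.
move=> Hh p4; have : #|H| != 1 by rewrite -perimeter_hole_eq4 // neq_ltn p4 orbT.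
by have := perimeter_hole_sqr_ge Hh; have := hole_card_gt0 Hh; nia.
Qed.

Lemma perimeter_hole_le6 H : H \in holes A -> perimeter H <= 6 -> #|H| <= 2.
Proof. by move=> Hh; have := perimeter_hole_sqr_ge Hh; nia. Qed.

Definition one_domino_hole : Prop :=
  exists2 H0, H0 \in holes A &
    (#|H0| = 2 /\ forall H, H \in holes A -> H != H0 -> #|H| = 1).

Lemma sum_perimeter_excess :
  \sum_(H in holes A) (perimeter H - 4) = holes_perimeter A - 4 * #|holes A|.
Proof. by rewrite sumnB => [|H /perimeter_hole_ge4//]; rewrite sum_nat_const mulnC. Qed.

Lemma holes_perimeter_ge : 4 * #|holes A| <= holes_perimeter A.
Proof. by rewrite mulnC -sum_nat_const; apply: leq_sum => H /perimeter_hole_ge4. Qed.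

Lemma one_domino_hole_perimeter : one_domino_hole -> 4 * #|holes A| + 2 <= holes_perimeter A.
Proof.
case=> H0 H0h [H0_2 _].
have p6 : 6 <= perimeter H0.
  apply: perimeter_hole_gt4 => //; rewrite ltn_neqAle perimeter_hole_ge4 // andbT.
  by rewrite eq_sym perimeter_hole_eq4 // H0_2.
have := sum_perimeter_excess; rewrite (bigD1 H0) //=; have := holes_perimeter_ge; lia.
Qed.

Lemma holes_perimeter_excess :
  4 * #|holes A| < holes_perimeter A -> holes_perimeter A <= 4 * #|holes A| + 2 ->
  one_domino_hole /\ holes_perimeter A = 4 * #|holes A| + 2.
Proof.
move=> lo hi; have excess := sum_perimeter_excess.
(* Naming #|holes A| keeps it intact through the simplification after bigD1, for lia. *)
set h := #|holes A| in lo hi excess *.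
have [H0 H0h p0] : exists2 H0, H0 \in holes A & 4 < perimeter H0.
  apply/exists_inP; apply: contraLR lo => /exists_inPn le4.
  rewrite -leqNgt -subn_eq0 -excess big1 // => H /le4; rewrite -leqNgt => ?.
  by apply/eqP; rewrite subn_eq0.
have p6 := perimeter_hole_gt4 H0h p0.
move: excess; rewrite (bigD1 H0) //=; set rest := \sum_(H in _ | _) _ => excess.
have /eqP rest0 : rest = 0 by lia.
split; last by lia.
exists H0 => //; split.
  have := perimeter_hole_le6 H0h; have := hole_card_gt0 H0h.
  have : #|H0| != 1 by rewrite -perimeter_hole_eq4 // gtn_eqF.
  by lia.
move=> H Hh HH0; apply/eqP; rewrite -perimeter_hole_eq4 // eqn_leq perimeter_hole_ge4 // andbT.
by move: rest0; rewrite /rest sum_nat_eq0 => /forall_inP/(_ H); rewrite Hh HH0 subn_eq0; apply.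
Qed.

End Holes.

Section PolyominoDualGraph.
Variables (N : nat) (A : {set cell N}).
Hypothesis pA : polyomino A.

Lemma polyomino_dual_connect x y :
  x \in A -> y \in A -> connect (edge_rel (dual_edges A)) x y.
Proof.
by have [_ _ conA] := pA; move=> xA yA; rewrite (eq_connect (edge_rel_dual_edges A)) conA.
Qed.

Lemma polyomino_card_le : #|A| <= #|dual_edges A| + 1.
Proof. exact: connected_card_le polyomino_dual_connect. Qed.

Lemma polyomino_tree_acyclic : #|dual_edges A| + 1 = #|A| -> ~ single_cycle A.
Proof.
move=> EA [C [/is_cycle_dual_edges[CE cC] _]].
have := cycle_card_le polyomino_dual_connect (pair_family_sub (@dual_edges_pair N A) CE) CE cC.
by rewrite -EA addn1 ltnn.
Qed.

Lemma polyomino_unicyclic : #|dual_edges A| = #|A| -> single_cycle A.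
Proof.
move=> EA; have [nA _ _] := pA.
have [C CE cC] := exists_cycle_card (@dual_edges_pair N A) (dual_edges_cover A) nA
  (eq_leq (esym EA)).
exists C; split => [|C' /is_cycle_dual_edges[C'E cC']]; first exact/is_cycle_dual_edges.
have sub := unicyclic_cycle_sub (@dual_edges_pair N A) polyomino_dual_connect EA.
by apply/eqP; rewrite eqEsubset (sub C' C) ?(sub C C').
Qed.

End PolyominoDualGraph.

Import Order.TTheory GRing.Theory Num.Theory.
Local Open Scope ring_scope.

Lemma ceil2sqrt_le (R : realType) (n h k : nat) :
  (4 * (n + h) <= k ^ 2)%N -> ceil2sqrt R n h <= k%:Z.
Proof.
move=> le_nhk; rewrite /ceil2sqrt ceil_le_int -(@ler_pXn2r _ 2) ?nnegrE //; last first.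
  by rewrite mulr_ge0 ?sqrtr_ge0.
by rewrite exprMn sqr_sqrtr // -[k%:~R]/(k%:R) -!natrX -natrM ler_nat.
Qed.

Lemma Mnh_eq_half (R : realType) (n h : nat) :
  Mnh R n h = h%:R + 1 / 2 -> exists c : nat, ceil2sqrt R n h = c%:Z /\ n = (c + 2 * h)%N.
Proof.
have : 0 <= ceil2sqrt R n h.
  by rewrite /ceil2sqrt ceil_ge0; have := @sqrtr_ge0 _ ((n + h)%:R : R); lra.
rewrite /Mnh; case: (ceil2sqrt R n h) => // c _ E; exists c; split => //.
have {}E : 2 * n%:R + 2 - 2 * c%:R = 4 * (h%:R + 1 / 2) :> R by rewrite -E; field.
by apply/eqP; rewrite -(eqr_nat R) natrD natrM; lra.
Qed.

Lemma ceil2sqrt_le_p_out (R : realType) (N : nat) (A : {set cell N}) (c : nat) :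
  (forall x, x \in A -> ~~ on_border x) ->
  ceil2sqrt R #|A| #|holes A| = c%:Z -> (2 * c <= p_out A)%N.
Proof.
move=> iA ceq; have iF x : x \in A :|: hole_cells A -> ~~ on_border x.
  by rewrite !inE => /orP[/iA|/hole_cell_interior].
have [k [Fk pk]] := perimeter_isoperimetric iF; rewrite -p_out_filled in pk.
have : ceil2sqrt R #|A| #|holes A| <= k%:Z.
  by apply: ceil2sqrt_le; apply: leq_trans Fk; rewrite leq_mul2l card_filled.
by rewrite ceq lez_nat; lia.
Qed.

Unset Implicit Arguments.

Theorem corollary1 (R : realType) (N : nat) (A : {set cell N}) :
  polyomino A ->
  Mnh R (ntiles A) (nholes A) = (nholes A)%:R + 1 / 2 ->
  let P1 := single_cycle A in
  let P2 := exists2 H0, H0 \in holes A &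
              (#|H0| = 2%N /\ forall H, H \in holes A -> H != H0 -> #|H| = 1%N) in
  let P3 := ((p_out A)%:R : R) = 2 * (ceil2sqrt R (ntiles A) (nholes A))%:~R + 2 in
  [\/ [/\ P1, ~ P2 & ~ P3], [/\ ~ P1, P2 & ~ P3] | [/\ ~ P1, ~ P2 & P3]].
Proof.
move=> pA hyp P1 P2 P3; have [_ iA _] := pA.
have [c [ceq nE]] := Mnh_eq_half hyp; rewrite /ntiles /nholes in nE.
have P3E : P3 <-> p_out A = (2 * c + 2)%N.
  rewrite /P3 ceq; have -> : 2 * (c%:Z)%:~R + 2 = (2 * c + 2)%N%:R :> R by rewrite natrD natrM.
  by split => [/eqP|->//]; rewrite eqr_nat => /eqP.
have count := tiles_adjacency_count iA.
have outer_ge := ceil2sqrt_le_p_out iA ceq.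
have holes_ge := holes_perimeter_ge A.
have tiles_le := polyomino_card_le pA.
case: (ltngtP #|dual_edges A| #|A|) => [ltEA|gtEA|eqEA]; last first.
- apply: Or31; split; [exact: polyomino_unicyclic | move/one_domino_hole_perimeter | move/P3E]; lia.
- lia.
have tree : (#|dual_edges A| + 1 = #|A|)%N by lia.
have no_cycle := polyomino_tree_acyclic pA tree.
have [lo|hi] := ltnP (4 * #|holes A|) (holes_perimeter A).
  have [p2 hpE] := holes_perimeter_excess lo ltac:(lia).
  by apply: Or32; split => // /P3E; lia.
by apply: Or33; split => //; [move/one_domino_hole_perimeter | apply/P3E]; lia.
Qed.
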